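(* Let $\Gamma$ be a symmetric, folded, idempotent family of Boolean promise relations such that $\operatorname{AT}_L\notin\operatorname{poly}(\Gamma)$ for some odd positive integer $L$. Then there is a promise relation $(P,Q)$ with $\operatorname{poly}(\Gamma)\subseteq\operatorname{poly}(P,Q)$ of one of the following two forms: either $P=\operatorname{Ham}_k(\{1\})$, $Q=\operatorname{Ham}_k(\{0,1,\dots,k-2,k\})$ for some $k\ge 3$; or $P=\operatorname{Ham}_k(\{0,b\})$, $Q=\operatorname{Ham}_k(\{0,\dots,k-1\})$ for some $k\ge 2$ and $b\in\{1,\dots,k-1\}$.
   Context: Domain $\{0,1\}$. A promise relation is a pair $(P,Q)$ with $P\subseteq Q\subseteq\{0,1\}^k$. $f:\{0,1\}^L\to\{0,1\}$ is a weak polymorphism of $(P,Q)$ if for all $x^{(1)},\dots,x^{(L)}\in P$, $(f(x^{(1)}_1,\dots,x^{(L)}_1),\dots,f(x^{(1)}_k,\dots,x^{(L)}_k))\in Q$; $\operatorname{poly}(\Gamma)$ is the set of functions that are weak polymorphisms of every member of $\Gamma$. $\Gamma$ is symmetric if every relation appearing in it is invariant under coordinate permutations; folded if each $f\in\operatorname{poly}(\Gamma)$ satisfies $f(\bar x)=\neg f(x)$; idempotent if each $f\in\operatorname{poly}(\Gamma)$ satisfies $f(0,\dots,0)=0$, $f(1,\dots,1)=1$. $\operatorname{Ham}_k(S)=\{x\in\{0,1\}^k:|x|\in S\}$ where $|x|$ is the Hamming weight. For odd $L$, $\operatorname{AT}_L(x)=1$ iff $\sum_{i=1}^L(-1)^{i-1}x_i>0$.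 *)

From mathcomp Require Import all_boot all_order all_algebra all_fingroup.
Set Implicit Arguments. Unset Strict Implicit. Unset Printing Implicit Defensive.
Import GRing.Theory Num.Theory.

(* A family Gamma of promise relations is a predicate: Gamma k P Q holds iff
   (P, Q) (of arity k) is a member of the family. *)
Definition pfamily_t := forall k : nat, {set k.-tuple bool} -> {set k.-tuple bool} -> Prop.

Definition weak_poly (L k : nat) (P Q : {set k.-tuple bool})
  (f : L.-tuple bool -> bool) : Prop :=
  forall x : L.-tuple (k.-tuple bool),
    (forall i : 'I_L, tnth x i \in P) ->
    [tuple f [tuple tnth (tnth x i) j | i < L] | j < k] \in Q.

Definition in_poly (G : pfamily_t) (L : nat) (f : L.-tuple bool -> bool) : Prop :=
  forall k (P Q : {set k.-tuple bool}), G k P Q -> weak_poly P Q f.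

Definition is_promise_family (G : pfamily_t) : Prop :=
  forall k (P Q : {set k.-tuple bool}), G k P Q -> P \subset Q.

Definition permute_tuple k (s : 'S_k) (t : k.-tuple bool) : k.-tuple bool :=
  [tuple tnth t (s i) | i < k].

Definition symmetric_family (G : pfamily_t) : Prop :=
  forall k (P Q : {set k.-tuple bool}), G k P Q ->
    forall (s : 'S_k) (t : k.-tuple bool),
      (t \in P -> permute_tuple s t \in P) /\ (t \in Q -> permute_tuple s t \in Q).

Definition folded_family (G : pfamily_t) : Prop :=
  forall L (f : L.-tuple bool -> bool), in_poly G f ->
    forall x : L.-tuple bool, f (map_tuple negb x) = ~~ f x.

Definition idempotent_family (G : pfamily_t) : Prop :=
  forall L (f : L.-tuple bool -> bool), in_poly G f ->
    f [tuple false | _ < L] = false /\ f [tuple true | _ < L] = true.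

Definition Ham (k : nat) (S : pred nat) : {set k.-tuple bool} :=
  [set t : k.-tuple bool | S (count id t)].

(* Alternating threshold AT_L (x) = 1 iff sum_i (-1)^(i-1) x_i > 0 (1-indexed) *)
Definition AT (L : nat) (x : L.-tuple bool) : bool :=
  (0 < \sum_(i < L) ((-1) ^+ (i : nat) * ((tnth x i : nat)%:Z)))%R.

(* Take (P, Q) in Gamma and rows x_1, ..., x_L in P whose columnwise image t
   under AT_L is not in Q. By symmetry, membership in P and Q only depends on
   the Hamming weight, so let r_i be the weight of x_i and |t| that of t; as
   P is contained in Q, r_i <> |t|. A folded idempotent f commutes with every
   unary Boolean map, hence stays a weak polymorphism of any relation obtained
   from (P, Q) by fixing some coordinates to constants and possibly negating
   all the others. If |t| = 0 (resp. |t| = k) the rows cannot all have the same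
   weight r, because for odd L the alternating sums of the columns add up to
   r; two weights r_i < r_j then yield the second form. If 0 < |t| < k, some
   row has weight strictly between 0 and k, since otherwise all columns agree
   and t is constant; that row yields the first form. *)

From mathcomp Require Import all_boot all_order all_algebra all_fingroup.
From mathcomp Require Import zify.
From Stdlib Require Import Classical.
Set Implicit Arguments. Unset Strict Implicit. Unset Printing Implicit Defensive.
Import Order.TTheory GRing.Theory Num.Theory.

Definition apply_columns L k (f : L.-tuple bool -> bool)
    (x : L.-tuple (k.-tuple bool)) : k.-tuple bool :=
  [tuple f [tuple tnth (tnth x i) j | i < L] | j < k].

Lemma not_in_poly_witness (G : pfamily_t) L (f : L.-tuple bool -> bool) :
  ~ in_poly G f ->
  exists k (P Q : {set k.-tuple bool}) (x : L.-tuple (k.-tuple bool)),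
    [/\ G k P Q, forall i, tnth x i \in P & apply_columns f x \notin Q].
Proof.
move=> notf; apply: NNPP => noW; apply: notf => k P Q GPQ x xP.
apply: NNPP => /negP notQ; apply: noW; by exists k, P, Q, x.
Qed.

Lemma weak_poly_pullback L k k' (f : L.-tuple bool -> bool)
    (phi : k'.-tuple bool -> k.-tuple bool)
    (P Q : {set k.-tuple bool}) (P' Q' : {set k'.-tuple bool}) :
  (forall x, apply_columns f (map_tuple phi x) = phi (apply_columns f x)) ->
  (forall y, y \in P' -> phi y \in P) -> (forall y, phi y \in Q -> y \in Q') ->
  weak_poly P Q f -> weak_poly P' Q' f.
Proof.
move=> phiC phiP phiQ fPQ x xP'; apply: phiQ; rewrite -phiC.
by apply: fPQ => i; rewrite tnth_map; apply: phiP.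
Qed.

Lemma commute_map_tuple L (f : L.-tuple bool -> bool) :
  (forall x, f (map_tuple negb x) = ~~ f x) ->
  f [tuple false | _ < L] = false -> f [tuple true | _ < L] = true ->
  forall (g : bool -> bool) x, f (map_tuple g x) = g (f x).
Proof.
move=> fN f0 f1 g x.
have const_map b : g =1 (fun=> b) -> map_tuple g x = [tuple b | _ < L].
  by move=> gb; apply: eq_from_tnth => i; rewrite tnth_map tnth_mktuple gb.
case gT: (g true); case gF: (g false).
- by rewrite (const_map true) ?f1 => [|[]]; case: (f x).
- have -> : map_tuple g x = x.
    by apply: eq_from_tnth => i; rewrite tnth_map; case: (tnth x i).
  by case: (f x).
- have -> : map_tuple g x = map_tuple negb x.
    by apply: eq_from_tnth => i; rewrite !tnth_map; case: (tnth x i).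
  by rewrite fN; case: (f x).
- by rewrite (const_map false) ?f0 => [|[]]; case: (f x).
Qed.

Lemma in_poly_commute_map_tuple (G : pfamily_t) L (f : L.-tuple bool -> bool) :
  folded_family G -> idempotent_family G -> in_poly G f ->
  forall (g : bool -> bool) x, f (map_tuple g x) = g (f x).
Proof.
move=> Gfold Gidem Gf; have [f0 f1] := Gidem _ _ Gf.
exact: commute_map_tuple (Gfold _ _ Gf) f0 f1.
Qed.

Definition pad_seq (neg : bool) (c d : nat) (y : seq bool) : seq bool :=
  map (xorb neg) y ++ nseq c true ++ nseq d false.

(* [insubd] avoids casting [(size y + c + d).-tuple] to [k.-tuple]; the default
   is only returned when [size y + c + d != k]. *)
Definition pad k neg c d (y : seq bool) : k.-tuple bool :=
  insubd [tuple false | _ < k] (pad_seq neg c d y).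

Lemma val_pad k neg c d y :
  size y + c + d = k -> val (pad k neg c d y) = pad_seq neg c d y.
Proof.
by move=> yk; rewrite val_insubd /pad_seq !size_cat size_map !size_nseq addnA yk eqxx.
Qed.

Lemma count_pad_seq neg c d y :
  count id (pad_seq neg c d y) = (if neg then size y - count id y else count id y) + c.
Proof.
rewrite /pad_seq !count_cat !count_nseq /= mul0n addn0 mul1n count_map.
case: neg => //=; have := count_predC id y.
have -> : count (preim negb id) y = count (predC id) y by apply: eq_count.
lia.
Qed.

Lemma nth_pad_seq neg c d y j :
  nth false (pad_seq neg c d y) j =
  if j < size y then xorb neg (nth false y j) else j < size y + c.
Proof.
rewrite /pad_seq nth_cat size_map; case: ifP => jy; first by rewrite (nth_map false).
rewrite nth_cat size_nseq !nth_nseq if_same.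
by case: ltnP => jc; apply/esym; [apply/idP|apply/negbTE]; lia.
Qed.

Lemma apply_columns_pad L k k' (f : L.-tuple bool -> bool) neg c d
    (x : L.-tuple (k'.-tuple bool)) :
  (forall (g : bool -> bool) z, f (map_tuple g z) = g (f z)) -> k' + c + d = k ->
  apply_columns f (map_tuple (fun y : k'.-tuple bool => pad k neg c d y) x) =
  pad k neg c d (apply_columns f x).
Proof.
move=> fC kE; apply: eq_from_tnth => j.
pose g b := if j < k' then xorb neg b else j < k' + c.
set col := [tuple nth false (tnth x i) j | i < L].
have padE (y : k'.-tuple bool) : tnth (pad k neg c d y) j = g (nth false y j).
  by rewrite (tnth_nth false) val_pad ?size_tuple // nth_pad_seq size_tuple.
rewrite tnth_mktuple.
have -> : [tuple tnth (tnth (map_tuple (fun y : k'.-tuple bool => pad k neg c d y) x) i) j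
          | i < L] = map_tuple g col.
  by apply: eq_from_tnth => i; rewrite !tnth_map /col; apply: padE.
rewrite (fC g col) padE /g; case: ifP => // jk.
rewrite -[j : nat]/(nat_of_ord (Ordinal jk)) nth_mktuple; congr (xorb _ (f _)).
by apply: eq_from_tnth => i; rewrite /col !tnth_mktuple (tnth_nth false).
Qed.

Lemma permute_tuple_of_count k (t1 t2 : k.-tuple bool) :
  count id t1 = count id t2 -> exists s : 'S_k, t2 = permute_tuple s t1.
Proof.
have count_mem_bool (b : bool) (s : seq bool) :
    count_mem b s = if b then count id s else size s - count id s.
  case: b; first by apply: eq_count; case.
  by rewrite -(count_predC id s) addKn; apply: eq_count; case.
move=> t12; have : perm_eq t2 t1.
  by apply/allP => b _ /=; rewrite !count_mem_bool !size_tuple t12.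
case/tuple_permP => s t2E; exists s; apply: val_inj; by rewrite /= t2E.
Qed.

Lemma symmetric_family_count (G : pfamily_t) k (P Q : {set k.-tuple bool})
    (t1 t2 : k.-tuple bool) :
  symmetric_family G -> G k P Q -> count id t1 = count id t2 ->
  (t1 \in P -> t2 \in P) /\ (t1 \in Q -> t2 \in Q).
Proof.
move=> Gsym GPQ /permute_tuple_of_count [s ->]; exact: Gsym.
Qed.

Lemma count_tuple_full k (t : k.-tuple bool) : (count id t == k) = [forall j, tnth t j].
Proof. by rewrite -[X in _ == X](size_tuple t) -all_count; apply/all_tnthP/forallP. Qed.

Lemma count_tuple_eq0 k (t : k.-tuple bool) : (count id t == 0) = [forall j, ~~ tnth t j].
Proof. by rewrite eqn0Ngt -has_count -all_predC; apply/all_tnthP/forallP. Qed.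

Lemma count_apply_columns_const_rows L k (f : L.-tuple bool -> bool)
    (x : L.-tuple (k.-tuple bool)) :
  (forall i, count id (tnth x i) \in [:: 0; k]) ->
  count id (apply_columns f x) \in [:: 0; k].
Proof.
move=> x0k; pose b := f [tuple count id (tnth x i) == k | i < L].
have rowE i j : tnth (tnth x i) j = (count id (tnth x i) == k).
  have := x0k i; rewrite !inE; case/orP=> /eqP ci.
    have /forallP/(_ j)/negbTE -> : [forall j, ~~ tnth (tnth x i) j].
      by rewrite -count_tuple_eq0 ci.
    by rewrite ci; apply/esym/eqP; have := ltn_ord j; lia.
  have /forallP -> : [forall j, tnth (tnth x i) j] by rewrite -count_tuple_full ci.
  by rewrite ci eqxx.
have colsE j : tnth (apply_columns f x) j = b.
  by rewrite tnth_mktuple; congr f; apply: eq_from_tnth => i; rewrite !tnth_mktuple rowE.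
rewrite !inE count_tuple_full count_tuple_eq0.
by case: (boolP b) => bE; apply/orP; [right|left]; apply/forallP => j; rewrite colsE.
Qed.

Definition alt_sum L (x : L.-tuple bool) : int :=
  (\sum_(i < L) (-1) ^+ (i : nat) * ((tnth x i : nat)%:Z))%R.

Lemma AT_alt_sum L (x : L.-tuple bool) : AT x = (0 < alt_sum x)%R.
Proof. by []. Qed.

Lemma sum_signr L : (\sum_(i < L) (-1) ^+ (i : nat) = (odd L : nat)%:Z :> int)%R.
Proof.
elim: L => [|L IH]; first by rewrite big_ord0.
by rewrite big_ord_recr /= IH -signr_odd; case: (odd L).
Qed.

Lemma count_tuple_sum k (t : k.-tuple bool) :
  ((count id t)%:Z = \sum_(j < k) ((tnth t j : nat)%:Z))%R.
Proof.
rewrite -sum1_count big_mkcond big_tuple /= (big_morph Posz PoszD (erefl (Posz 0))).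
by apply: eq_bigr => j _; case: (tnth t j).
Qed.

Lemma sum_alt_sum_columns L k n (x : L.-tuple (k.-tuple bool)) :
  odd L -> (forall i, count id (tnth x i) = n) ->
  (\sum_(j < k) alt_sum [tuple tnth (tnth x i) j | i < L] = n%:Z)%R.
Proof.
move=> oddL xn; rewrite exchange_big /=.
under eq_bigr => i _.
  rewrite -mulr_sumr (eq_bigr (fun j => ((tnth (tnth x i) j : nat)%:Z)%R)); last first.
    by move=> j _; rewrite tnth_mktuple.
  rewrite -count_tuple_sum xn.
  over.
by rewrite -mulr_suml sum_signr oddL mul1r.
Qed.

Lemma count_AT_columns_eq0 L k n (x : L.-tuple (k.-tuple bool)) :
  odd L -> (forall i, count id (tnth x i) = n) ->
  count id (apply_columns (@AT L) x) = 0 -> n = 0.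
Proof.
move=> oddL xn /eqP; rewrite count_tuple_eq0 => /forallP ATx0.
suff : (n%:Z <= 0)%R by lia.
rewrite -(sum_alt_sum_columns oddL xn); apply: sumr_le0 => j _.
by have := ATx0 j; rewrite tnth_mktuple AT_alt_sum -leNgt.
Qed.

Lemma count_AT_columns_full L k n (x : L.-tuple (k.-tuple bool)) :
  odd L -> (forall i, count id (tnth x i) = n) ->
  count id (apply_columns (@AT L) x) = k -> n = k.
Proof.
move=> oddL xn /eqP; rewrite count_tuple_full => /forallP ATx1.
have : (k%:Z <= n%:Z)%R.
  have -> : (k%:Z = \sum_(j < k) 1)%R by rewrite sumr_const card_ord natz.
  rewrite -(sum_alt_sum_columns oddL xn).
  by apply: ler_sum => j _; have := ATx1 j; rewrite tnth_mktuple AT_alt_sum; lia.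
have := count_size id (tnth x (Ordinal (odd_gt0 oddL))); rewrite xn size_tuple.
lia.
Qed.

Lemma exists_ltn_or_const (I : finType) (r : I -> nat) (i0 : I) :
  (exists i j, r i < r j) \/ (forall i, r i = r i0).
Proof.
case: (boolP [forall i, r i == r i0]) => [/forallP ri0|]; first by right=> i; apply/eqP.
rewrite negb_forall => /existsP [i]; case: ltngtP => // ri _; left.
  by exists i, i0.
by exists i0, i.
Qed.

Definition poly_included (G : pfamily_t) k (P Q : {set k.-tuple bool}) : Prop :=
  forall L (f : L.-tuple bool -> bool), in_poly G f -> weak_poly P Q f.

Definition poly_sub_one_in_k (G : pfamily_t) : Prop :=
  exists k, 3 <= k /\
    poly_included G (Ham k (pred1 1)) (Ham k [pred n | (n <= k - 2) || (n == k)]).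

Definition poly_sub_zero_or_b (G : pfamily_t) : Prop :=
  exists k b, 2 <= k /\ 1 <= b <= k - 1 /\
    poly_included G (Ham k [pred n | (n == 0) || (n == b)]) (Ham k [pred n | n <= k - 1]).

Section FailedAlternatingThreshold.

Variables (G : pfamily_t) (k L : nat) (P Q : {set k.-tuple bool}).
Variable x : L.-tuple (k.-tuple bool).
Hypotheses (Gpromise : is_promise_family G) (Gsym : symmetric_family G).
Hypotheses (Gfold : folded_family G) (Gidem : idempotent_family G).
Hypotheses (GPQ : @G k P Q) (oddL : odd L) (xP : forall i, tnth x i \in P).
Hypothesis ATx_notin_Q : apply_columns (@AT L) x \notin Q.

Local Notation r i := (count id (tnth x i)).
Local Notation t := (count id (apply_columns (@AT L) x)).

Lemma notin_Q_of_weight (y : k.-tuple bool) : count id y = t -> y \notin Q.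
Proof.
by move=> yt; apply: contra ATx_notin_Q; exact: (symmetric_family_count Gsym GPQ yt).2.
Qed.

Lemma in_P_of_weight i (y : k.-tuple bool) : count id y = r i -> y \in P.
Proof. by move=> yr; exact: (symmetric_family_count Gsym GPQ (esym yr)).1 (xP i). Qed.

Lemma row_weight_neq i : r i != t.
Proof. by apply/eqP => /notin_Q_of_weight; rewrite (subsetP (Gpromise GPQ)) ?xP. Qed.

Lemma row_weight_le i : r i <= k.
Proof. by have := count_size id (tnth x i); rewrite size_tuple. Qed.

Lemma poly_included_pad k' neg c d (S S' : pred nat) :
  k' + c + d = k ->
  (forall n, n <= k' -> n \in S -> exists i, (if neg then k' - n else n) + c = r i) ->
  (forall n, n <= k' -> n \notin S' -> (if neg then k' - n else n) + c = t) ->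
  poly_included G (Ham k' S) (Ham k' S').
Proof.
move=> kE padS padS' L' f Gf.
have count_pad (y : k'.-tuple bool) : count id (pad k neg c d y) =
    (if neg then k' - count id y else count id y) + c.
  by rewrite val_pad ?size_tuple // count_pad_seq size_tuple.
have y_le (y : k'.-tuple bool) : count id y <= k'.
  by have := count_size id y; rewrite size_tuple.
apply: (weak_poly_pullback _ _ _ (Gf _ _ _ GPQ)).
- by move=> z; apply: apply_columns_pad (in_poly_commute_map_tuple Gfold Gidem Gf) kE.
- move=> y; rewrite inE => /(padS _ (y_le y)) [i ri].
  by apply: (@in_P_of_weight i); rewrite count_pad.
- move=> y; apply: contraTT; rewrite inE => /(padS' _ (y_le y)) S'y.
  by apply: notin_Q_of_weight; rewrite count_pad.
Qed.

Lemma zero_or_b_of_weight0 : t = 0 -> poly_sub_zero_or_b G.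
Proof.
move=> t0; have i0 : 'I_L := Ordinal (odd_gt0 oddL).
have [[i [j rij]] | rconst] := exists_ltn_or_const (fun i => r i) i0; last first.
  by have := row_weight_neq i0; rewrite t0 (count_AT_columns_eq0 oddL rconst t0).
have := row_weight_neq i; have := row_weight_le j; rewrite t0 => rjk ri0.
exists (r j), (r j - r i); split; [lia | split; [lia |]].
apply: (@poly_included_pad _ true 0 (k - r j)) => [|n _|n nj]; rewrite ?inE; first lia.
- by case/orP => /eqP ->; [exists j | exists i]; lia.
- by rewrite t0; lia.
Qed.

Lemma zero_or_b_of_weight_full : t = k -> poly_sub_zero_or_b G.
Proof.
move=> tk; have i0 : 'I_L := Ordinal (odd_gt0 oddL).
have [[i [j rij]] | rconst] := exists_ltn_or_const (fun i => r i) i0; last first.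
  by have := row_weight_neq i0; rewrite tk (count_AT_columns_full oddL rconst tk) eqxx.
have := row_weight_le j; have := row_weight_neq j; rewrite tk => rjk rj_le.
exists (k - r i), (r j - r i); split; [lia | split; [lia |]].
apply: (@poly_included_pad _ false (r i) 0) => [|n _|n nk]; rewrite ?inE; first lia.
- by case/orP => /eqP ->; [exists i | exists j]; lia.
- by rewrite tk; lia.
Qed.

Lemma one_in_k_of_weight_mid : 0 < t < k -> poly_sub_one_in_k G.
Proof.
move=> tmid.
case: (boolP [forall i, r i \in [:: 0; k]]) => [/forallP rconst|].
  by have := count_apply_columns_const_rows (@AT L) rconst; rewrite !inE; lia.
rewrite negb_forall => /existsP [i]; rewrite !inE => ri.
have {}ri : 0 < r i < k by have := row_weight_le i; lia.
have := row_weight_neq i; case: ltngtP => // rit _.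
  exists (t - r i + 2); split; first lia.
  apply: (@poly_included_pad _ false (r i - 1) (k - t - 1)) => [|n _|n nk];
    rewrite ?inE; first lia.
  - by move/eqP ->; exists i; lia.
  - by lia.
exists (r i - t + 2); split; first lia.
apply: (@poly_included_pad _ true (t - 1) (k - r i - 1)) => [|n _|n nk];
  rewrite ?inE; first lia.
- by move/eqP ->; exists i; lia.
- by lia.
Qed.

End FailedAlternatingThreshold.

Theorem lemma4p4 (G : pfamily_t) :
  is_promise_family G ->
  symmetric_family G -> folded_family G -> idempotent_family G ->
  (exists L : nat, odd L /\ ~ in_poly G (@AT L)) ->
  (exists k : nat, 3 <= k /\
     forall L (f : L.-tuple bool -> bool), in_poly G f ->
       weak_poly (Ham k (pred1 1)) (Ham k [pred n | (n <= k - 2) || (n == k)]) f)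
  \/
  (exists k b : nat, 2 <= k /\ 1 <= b <= k - 1 /\
     forall L (f : L.-tuple bool -> bool), in_poly G f ->
       weak_poly (Ham k [pred n | (n == 0) || (n == b)]) (Ham k [pred n | n <= k - 1]) f).
Proof.
move=> Gpromise Gsym Gfold Gidem [L [oddL]].
move=> /not_in_poly_witness [k [P [Q [x [GPQ xP ATx]]]]].
have := count_size id (apply_columns (@AT L) x); rewrite size_tuple => t_le.
have [t0 | t_gt0] := posnP (count id (apply_columns (@AT L) x)).
  by right; apply: zero_or_b_of_weight0 Gpromise Gsym Gfold Gidem GPQ oddL xP ATx t0.
have [tk | tk] := eqVneq (count id (apply_columns (@AT L) x)) k.
  by right; apply: zero_or_b_of_weight_full Gpromise Gsym Gfold Gidem GPQ oddL xP ATx tk.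
left; apply: one_in_k_of_weight_mid Gpromise Gsym Gfold Gidem GPQ oddL xP ATx _.
by rewrite t_gt0 ltn_neqAle tk t_le.
Qed.
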